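(* Let $\mathbb{F}$ be a field and $n\geq 2$. The matrices $E_{hi}$ for $h\neq i$, $h,i=1,\dots,n$, together with the matrices $E_{hh}-E_{11}-E_{1h}+E_{h1}$ for $2\leq h\leq n$, form a basis of the Lie algebra $\mathfrak{sl}(n,\mathbb{F})$ of traceless $n\times n$ matrices, and each of these matrices has square zero.
   Context: $E_{ij}$ denotes the $n\times n$ matrix with $1$ in entry $(i,j)$ and $0$ elsewhere. *)

From HB Require Import structures.
From mathcomp Require Import all_boot all_order all_algebra.
Set Implicit Arguments. Unset Strict Implicit. Unset Printing Implicit Defensive.
Import GRing.Theory.
Local Open Scope ring_scope.

(* E n h i : the n x n matrix with 1 in entry (h,i) and 0 elsewhere,
   with 1-based row/column indices h, i (as in the paper). *)
Definition E (F : fieldType) (n h i : nat) : 'M[F]_n :=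
  \matrix_(r < n, c < n) (((r.+1 == h) && (c.+1 == i))%N)%:R.

Definition sl (F : fieldType) (n : nat) : {vspace 'M[F]_n} :=
  lker (linfun (fun A : 'M[F]_n => (\tr A : F^o))).

Definition sl_family (F : fieldType) (n : nat) : seq 'M[F]_n :=
  [seq E F n hi.1 hi.2 | hi <- [seq (h, i) | h <- iota 1 n, i <- iota 1 n] & hi.1 != hi.2] ++
  [seq E F n h h - E F n 1 1 - E F n 1 h + E F n h 1 | h <- iota 2 n.-1].

From HB Require Import structures.
From mathcomp Require Import all_boot all_order all_algebra.
Import GRing.Theory.
Local Open Scope ring_scope.

(* The kernel of the trace has codimension at most one, so dim sl(n) >= n^2 - 1,
   and the family has exactly n(n-1) + (n-1) = n^2 - 1 members; hence it is a
   basis as soon as it spans sl(n).  It does: a traceless A is the sum of its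
   off-diagonal part and of the A_hh (E_hh - E_11), and
   E_hh - E_11 = (E_hh - E_11 - E_1h + E_h1) + E_1h - E_h1.
   Squares vanish because E_hi E_hi = 0 for h <> i, and
   E_hh - E_11 - E_1h + E_h1 = (e_h - e_1)(e_h + e_1)^T
   with (e_h + e_1)^T (e_h - e_1) = 0. *)

Lemma dim_lker_functional {K : fieldType} {vT : vectType K} (f : 'Hom(vT, K^o)) :
  ((dim vT).-1 <= \dim (lker f))%N.
Proof.
have := limg_ker_dim f fullv; rewrite capfv dimvf => <-.
have : (\dim (limg f) <= 1)%N by have := dimvS (subvf (limg f)); rewrite dimvf.
by case: (\dim (limg f)) => [|[|]] // _; rewrite ?addn0 ?addn1 ?leq_pred.
Qed.

Lemma count_allpairs_neq (T : eqType) (s t : seq T) : uniq t -> {subset s <= t} ->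
  count (fun p : T * T => p.1 != p.2) [seq (x, y) | x <- s, y <- t]
  = (size s * (size t).-1)%N.
Proof.
move=> t_uniq; elim: s => [|x s IHs] //= sub_xs_t.
rewrite count_cat IHs => [|y s_y]; last by apply: sub_xs_t; rewrite inE s_y orbT.
rewrite count_map mulSn; congr (_ + _)%N.
have := count_predC (pred1 x) t.
rewrite count_uniq_mem // sub_xs_t ?mem_head // add1n => <- /=.
by apply: eq_count => y; rewrite /= eq_sym.
Qed.

Lemma mulmx_outer_sqr {R : pzRingType} {m n} (u : 'M[R]_(m, n)) (v : 'M_(n, m)) :
  v *m u = 0 -> (u *m v) *m (u *m v) = 0.
Proof. by move=> vu0; rewrite mulmxA -(mulmxA u) vu0 mulmx0 mul0mx. Qed.

Lemma traceless_delta_sum (R : pzRingType) n (A : 'M[R]_n.+1) : \tr A = 0 ->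
  A = \sum_i \sum_j A i j *: (delta_mx i j - (i == j)%:R *: delta_mx 0 0).
Proof.
move=> trA0; symmetry; transitivity (A - \tr A *: delta_mx 0 0); last first.
  by rewrite trA0 scale0r subr0.
rewrite [X in X - _](matrix_sum_delta A) /mxtrace scaler_suml -sumrB.
apply: eq_bigr => i _; rewrite (bigD1 i) //= [in RHS](bigD1 i) //= eqxx scale1r.
rewrite scalerBr [in RHS]addrAC; congr (_ + _).
by apply: eq_bigr => j ji; rewrite eq_sym (negbTE ji) scale0r subr0.
Qed.

Section SlFamily.

Variable F : fieldType.

Lemma E_delta n (i j : 'I_n) : E F n i.+1 j.+1 = delta_mx i j.
Proof. by apply/matrixP => r c; rewrite !mxE !eqSS. Qed.

Lemma E_sqr_neq n h i : h != i -> E F n h i *m E F n h i = 0.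
Proof.
move=> hi; apply/matrixP => r c; rewrite !mxE big1 // => k _; rewrite !mxE.
case: (k.+1 =P i) => [ki|]; case: (k.+1 =P h) => [kh|] /=;
  rewrite ?andbF ?andbT ?mul0r ?mulr0 //.
by move: hi; rewrite -ki -kh eqxx.
Qed.

Definition sl_diag_gen {n} (i : 'I_n.+1) : 'M[F]_n.+1 :=
  delta_mx i i - delta_mx 0 0 - delta_mx 0 i + delta_mx i 0.

Lemma sl_diag_genE n (i : 'I_n.+1) :
  sl_diag_gen i
  = E F n.+1 i.+1 i.+1 - E F n.+1 1 1 - E F n.+1 1 i.+1 + E F n.+1 i.+1 1.
Proof. by rewrite /sl_diag_gen -!E_delta. Qed.

Lemma sl_diag_gen_sqr n (i : 'I_n.+1) : sl_diag_gen i *m sl_diag_gen i = 0.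
Proof.
pose u : 'cV[F]_n.+1 := delta_mx i 0 - delta_mx 0 0.
pose v : 'rV[F]_n.+1 := delta_mx 0 i + delta_mx 0 0.
have -> : sl_diag_gen i = u *m v.
  rewrite /u /v mulmxBl !mulmxDr !mul_delta_mx /sl_diag_gen opprD !addrA.
  by rewrite [RHS]addrAC [X in _ = X - _]addrAC [RHS]addrAC.
apply: (mulmx_outer_sqr u v).
rewrite /u /v mulmxDl !mulmxBr !mul_delta_mx_cond eqxx eq_sym.
by rewrite addrC addrA subrK subrr.
Qed.

Lemma offdiag_in_sl_family n (i j : 'I_n) :
  i != j -> delta_mx i j \in sl_family F n.
Proof.
move=> ij; rewrite -E_delta mem_cat; apply/orP; left.
apply/mapP; exists (i.+1, j.+1) => //.
rewrite mem_filter /= eqSS ij /=.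
by apply: (allpairs_f pair); rewrite mem_iota /= add1n ltnS ltn_ord.
Qed.

Lemma sl_diag_gen_in_sl_family n (i : 'I_n.+1) : i != 0 ->
  sl_diag_gen i \in sl_family F n.+1.
Proof.
move=> i0; rewrite mem_cat sl_diag_genE; apply/orP; right.
by apply/mapP; exists i.+1; rewrite // mem_iota ltnS lt0n i0 add2n ltnS ltn_ord.
Qed.

Lemma size_sl_family n : size (sl_family F n) = (n * n).-1.
Proof.
rewrite size_cat !size_map size_iota size_filter count_allpairs_neq ?iota_uniq //.
by case: n => [|n] //=; rewrite size_iota mulnS addnC.
Qed.

Lemma sl_sub_span n : (sl F n.+1 <= <<sl_family F n.+1>>)%VS.
Proof.
apply/subvP => A; rewrite memv_ker lfunE => /eqP /traceless_delta_sum ->.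
apply: memv_suml => i _; apply: memv_suml => j _; apply: memvZ.
have [<-|ij] := eqVneq i j; last first.
  by rewrite scale0r subr0 memv_span // offdiag_in_sl_family.
rewrite scale1r; have [->|i0] := eqVneq i 0; first by rewrite subrr mem0v.
have -> : delta_mx i i - delta_mx 0 0 = sl_diag_gen i + delta_mx 0 i - delta_mx i 0.
  by rewrite /sl_diag_gen addrAC addrK subrK.
apply: memvB; [apply: memvD|]; apply: memv_span.
- exact: sl_diag_gen_in_sl_family.
- by apply: offdiag_in_sl_family; rewrite eq_sym.
- exact: offdiag_in_sl_family.
Qed.

Lemma sl_family_sqr n (A : 'M[F]_n.+1) : A \in sl_family F n.+1 -> A *m A = 0.
Proof.
rewrite mem_cat => /orP[/mapP[[h i]] | /mapP[h]].
  by rewrite mem_filter /= => /andP[hi _] ->; apply: E_sqr_neq.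
rewrite mem_iota add2n => /andP[h_gt1 h_le] ->.
have -> : h = (inord h.-1 : 'I_n.+1).+1 by rewrite inordK; case: h h_gt1 h_le.
by rewrite -sl_diag_genE sl_diag_gen_sqr.
Qed.

End SlFamily.

Theorem proposition1 (F : fieldType) (n : nat) (hn : (2 <= n)%N) :
  basis_of (sl F n) (sl_family F n) /\
  (forall A, A \in sl_family F n -> A *m A = 0).
Proof.
case: n hn => [|n] // _; split; last exact: sl_family_sqr.
rewrite basisEdim sl_sub_span size_sl_family.
have := dim_lker_functional (linfun (fun A : 'M[F]_n.+1 => (\tr A : F^o))).
by rewrite dim_matrix.
Qed.
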